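(* Let $p_1, p_2, \ldots, p_m$ ($m \geq 1$) be distinct primes and $n = p_1 p_2 \cdots p_m$. Then the non-nilradical graph $\Omega(\mathbb{Z}_n)$ is very cost effective.
   Context: $\mathbb{Z}_n$ is the ring of residue classes modulo $n$. The non-nilradical graph $\Omega(\mathbb{Z}_n)$ has as vertices the non-nilpotent zero-divisors of $\mathbb{Z}_n$, two distinct vertices being adjacent iff their product is $0$. For a graph $G=(V,E)$ and $S\subseteq V$, a vertex $v\in S$ is very cost effective if $|N(v)\cap S| < |N(v)\cap (V\setminus S)|$; $S$ is very cost effective if every vertex of $S$ is. A bipartition $\{S, V\setminus S\}$ is very cost effective if both parts are very cost effective, and $G$ is very cost effective if it has a very cost effective bipartition. *)

From mathcomp Require Import all_boot.
Set Implicit Arguments. Unset Strict Implicit. Unset Printing Implicit Defensive.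

(* Z_n is modelled on 'I_n (residues 0..n-1) with multiplication mod n. *)

Definition zero_divisor_Zn (n : nat) (x : 'I_n) : Prop :=
  exists y : 'I_n, (y : nat) <> 0 /\ (x * y) %% n = 0.

Definition nilpotent_Zn (n : nat) (x : 'I_n) : Prop :=
  exists k : nat, (x ^ k) %% n = 0.

Definition omega_vertex (n : nat) (x : 'I_n) : Prop :=
  zero_divisor_Zn x /\ ~ nilpotent_Zn x.

(* adjacency (between distinct residues with product 0); only used between
   vertices *)
Definition omega_adj (n : nat) (x y : 'I_n) : bool :=
  (x != y) && ((x * y) %% n == 0).

Definition nbhd (n : nat) (v : 'I_n) : {set 'I_n} := [set u | omega_adj u v].

Definition very_cost_effective_part (n : nat) (S T : {set 'I_n}) : Prop :=
  forall v, v \in S -> #|nbhd v :&: S| < #|nbhd v :&: T|.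

Definition omega_bipartition (n : nat) (S T : {set 'I_n}) : Prop :=
  [disjoint S & T] /\ (forall x : 'I_n, omega_vertex x <-> x \in S :|: T).

Definition omega_very_cost_effective (n : nat) : Prop :=
  exists S T : {set 'I_n}, omega_bipartition S T /\
    very_cost_effective_part S T /\ very_cost_effective_part T S.

From mathcomp Require Import all_boot.

Set Implicit Arguments.
Unset Strict Implicit.
Unset Printing Implicit Defensive.

(* Write n = p q with p prime and p not dividing q. As n is squarefree, the
   vertices of Omega(Z_n) are the nonzero non-units; put the nonzero multiples
   of p in S and the other vertices in T. T is independent, since x y = 0 in
   Z_n forces p | x y, and every x in T has the neighbour n / gcd(x, n) in S.
   For x in S, translation by q maps the S-neighbours of x injectively to
   T-neighbours of x different from q, and q itself is a T-neighbour of x. *)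

Lemma not_coprime_of_zero_divisor n (x y : 'I_n) :
  (y : nat) != 0 -> n %| x * y -> ~~ coprime x n.
Proof.
move=> y_neq0 n_dvd_xy; apply/negP => co_xn.
move: n_dvd_xy; rewrite Gauss_dvdr; last by rewrite coprime_sym.
move=> /dvdn_leq; rewrite lt0n y_neq0 => /(_ isT).
by rewrite leqNgt ltn_ord.
Qed.

Lemma zero_divisor_of_not_coprime n (x : 'I_n) :
  ~~ coprime x n -> exists2 y : 'I_n, (y : nat) != 0 & n %| x * y.
Proof.
move=> nco_xn; set g := gcdn x n.
have n_gt0 : 0 < n by apply: leq_ltn_trans (ltn_ord x).
have g_gt1 : 1 < g.
  have : 0 < g by rewrite gcdn_gt0 n_gt0 orbT.
  by move: nco_xn; rewrite /coprime -/g; case: g => [|[|]].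
exists (Ordinal (ltn_Pdiv g_gt1 n_gt0)) => /=.
  by rewrite -lt0n divn_gt0 ?gcdn_gt0 ?n_gt0 ?orbT // dvdn_leq ?dvdn_gcdr.
by rewrite muln_divCA ?dvdn_gcdl ?dvdn_gcdr // dvdn_mulr.
Qed.

Lemma not_coprime_of_prime_dvd p n x :
  prime p -> p %| n -> p %| x -> ~~ coprime x n.
Proof.
move=> p_prime p_dvd_n p_dvd_x; apply/negP => co_xn.
have : coprime p n by apply: coprime_dvdl co_xn.
by rewrite prime_coprime // p_dvd_n.
Qed.

Definition reduced_modulus (n : nat) : Prop :=
  forall z k, n %| z ^ k -> n %| z.

Lemma omega_vertexP n (x : 'I_n) : reduced_modulus n ->
  omega_vertex x <-> ((x : nat) != 0) && ~~ coprime x n.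
Proof.
move=> n_reduced; split.
  move=> [[y [y_neq0 xy0]] x_not_nil].
  have x_neq0 : (x : nat) != 0.
    apply/negP => /eqP x0; apply: x_not_nil.
    by exists 1; rewrite expn1 x0 mod0n.
  by rewrite x_neq0 (@not_coprime_of_zero_divisor _ _ y) //; apply/eqP.
move=> /andP [x_neq0 nco_xn]; split.
  have [y y_neq0 n_dvd_xy] := zero_divisor_of_not_coprime nco_xn.
  by exists y; split; apply/eqP.
move=> [k /eqP /n_reduced /dvdn_leq]; rewrite lt0n x_neq0 => /(_ isT).
by rewrite leqNgt ltn_ord.
Qed.

Lemma in_nbhd n (u v : 'I_n) : (u \in nbhd v) = (u != v) && (n %| u * v).
Proof. by rewrite inE. Qed.

Section PrimeTimesCofactor.

Variables p q : nat.
Hypotheses (p_prime : prime p) (p_ndvd_q : ~~ (p %| q)).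
Hypothesis n_reduced : reduced_modulus (p * q).

Local Notation n := (p * q).

Lemma cofactor_gt0 : 0 < q.
Proof. by case: q p_ndvd_q => [|q']; rewrite ?dvdn0. Qed.

Lemma cofactor_lt : q < n.
Proof. by rewrite ltn_Pmull ?prime_gt1 ?cofactor_gt0. Qed.

Lemma modulus_gt0 : 0 < n.
Proof. exact: leq_ltn_trans cofactor_lt. Qed.

Definition vertices_p_dvd : {set 'I_n} :=
  [set x : 'I_n | ((x : nat) != 0) && (p %| x)].

Definition vertices_p_ndvd : {set 'I_n} :=
  [set x : 'I_n | [&& (x : nat) != 0, ~~ (p %| x) & ~~ coprime x n]].

Local Notation S := vertices_p_dvd.
Local Notation T := vertices_p_ndvd.

Lemma omega_bipartition_p : omega_bipartition S T.
Proof.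
split.
  rewrite -setI_eq0; apply/eqP/setP => x.
  by rewrite !inE; case: (p %| x); rewrite ?andbF.
move=> x; apply: (iff_trans (omega_vertexP x n_reduced)); rewrite !inE.
case: (boolP (p %| x)) => p_x; rewrite ?andbF ?andbT ?orbF //=.
by rewrite (@not_coprime_of_prime_dvd p) ?andbT ?dvdn_mulr.
Qed.

Lemma nbhd_p_ndvd_independent x : x \in T -> nbhd x :&: T = set0.
Proof.
rewrite inE => /and3P [_ p_ndvd_x _].
apply/setP => z; rewrite !inE; apply/negP => /andP [/andP [_ n_dvd_zx]].
have : p %| z * x by apply: dvdn_trans n_dvd_zx; rewrite dvdn_mulr.
by rewrite Euclid_dvdM // (negbTE p_ndvd_x) orbF => ->; rewrite andbF.
Qed.

Lemma nbhd_p_ndvd_meets_p_dvd x : x \in T -> nbhd x :&: S != set0.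
Proof.
rewrite inE => /and3P [_ p_ndvd_x nco_xn].
have [y y_neq0 n_dvd_xy] := zero_divisor_of_not_coprime nco_xn.
apply/set0Pn; exists y.
rewrite !inE /omega_adj y_neq0 (mulnC y x) -/(dvdn _ _) n_dvd_xy andbT /=.
have p_dvd_y : p %| y.
  have : p %| x * y by apply: dvdn_trans n_dvd_xy; rewrite dvdn_mulr.
  by rewrite Euclid_dvdM // (negbTE p_ndvd_x).
by rewrite p_dvd_y andbT; apply: contraNneq p_ndvd_x => <-.
Qed.

Lemma very_cost_effective_p_ndvd : very_cost_effective_part T S.
Proof.
move=> x x_T; rewrite nbhd_p_ndvd_independent // cards0 card_gt0.
exact: nbhd_p_ndvd_meets_p_dvd.
Qed.

Definition cofactor_ord : 'I_n := Ordinal cofactor_lt.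

Definition shift_cofactor (y : 'I_n) : 'I_n :=
  Ordinal (ltn_pmod (y + q) modulus_gt0).

Lemma shift_cofactor_inj : injective shift_cofactor.
Proof.
move=> a b /(congr1 val) /= /eqP.
by rewrite eqn_modDr !modn_small // => /eqP /val_inj.
Qed.

Lemma cofactor_annihilates_p_dvd x : p %| x -> n %| q * x.
Proof. by move=> /dvdnP [k ->]; rewrite mulnCA [q * p]mulnC dvdn_mull. Qed.

Lemma cofactor_in_nbhd x : x \in S -> cofactor_ord \in nbhd x :&: T.
Proof.
rewrite inE => /andP [x_neq0 p_dvd_x].
rewrite in_setI in_nbhd inE /= cofactor_annihilates_p_dvd // p_ndvd_q.
rewrite -lt0n cofactor_gt0.
rewrite (@not_coprime_of_zero_divisor _ cofactor_ord x)
  ?cofactor_annihilates_p_dvd //.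
by rewrite !andbT; apply: contraNneq p_ndvd_q => /(congr1 val) /= ->.
Qed.

Lemma shift_cofactor_nbhd x y : x \in S -> y \in nbhd x :&: S ->
  shift_cofactor y \in (nbhd x :&: T) :\ cofactor_ord.
Proof.
rewrite in_setI in_nbhd !inE.
move=> /andP [x_neq0 p_dvd_x] /andP [/andP [_ n_dvd_yx] /andP [y_neq0 p_dvd_y]].
set z := shift_cofactor y.
have p_ndvd_z : ~~ (p %| z).
  by rewrite /dvdn /= modn_dvdm ?dvdn_mulr // -/(dvdn _ _) dvdn_addr.
have n_dvd_zx : n %| z * x.
  rewrite /dvdn /= modnMml mulnDl -/(dvdn _ _).
  by rewrite dvdn_add // cofactor_annihilates_p_dvd.
have z_neq_q : z != cofactor_ord.
  move: y_neq0; apply: contra_neq => /(congr1 val) /= yq_mod_n.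
  have : y + q == 0 + q %[mod n].
    by rewrite yq_mod_n add0n modn_small ?cofactor_lt.
  by rewrite eqn_modDr mod0n modn_small // => /eqP.
clearbody z.
rewrite /omega_adj -/(dvdn n (z * x)) n_dvd_zx p_ndvd_z z_neq_q.
rewrite (@not_coprime_of_zero_divisor _ z x) // !andbT /=.
by apply/andP; split; apply: contraNneq p_ndvd_z => ->.
Qed.

Lemma very_cost_effective_p_dvd : very_cost_effective_part S T.
Proof.
move=> x x_S; rewrite -(card_imset _ shift_cofactor_inj).
have sub :
    shift_cofactor @: (nbhd x :&: S) \subset (nbhd x :&: T) :\ cofactor_ord.
  by apply/subsetP => _ /imsetP [y y_in ->]; exact: shift_cofactor_nbhd.
apply: (leq_ltn_trans (subset_leq_card sub)).
by rewrite [X in _ < X](cardsD1 cofactor_ord) cofactor_in_nbhd.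
Qed.

Theorem omega_very_cost_effective_prime_mul : omega_very_cost_effective n.
Proof.
exists S, T; split; first exact: omega_bipartition_p.
split; first exact: very_cost_effective_p_dvd.
exact: very_cost_effective_p_ndvd.
Qed.

End PrimeTimesCofactor.

Lemma prime_ndvd_prod p ps : prime p -> all prime ps -> p \notin ps ->
  ~~ (p %| \prod_(r <- ps) r).
Proof.
move=> p_prime; elim: ps => [|r ps IH] /=.
  by rewrite big_nil dvdn1 => _ _; apply: contraTneq p_prime => ->.
move=> /andP [r_prime ps_prime].
rewrite inE negb_or => /andP [p_neq_r p_notin_ps].
by rewrite big_cons Euclid_dvdM // dvdn_prime2 // (negbTE p_neq_r) IH.
Qed.

Lemma prod_uniq_primes_dvd ps x : uniq ps -> all prime ps ->
  {in ps, forall r, r %| x} -> \prod_(r <- ps) r %| x.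
Proof.
elim: ps => [|r ps IH] /=; first by rewrite big_nil dvd1n.
move=> /andP [r_notin_ps ps_uniq] /andP [r_prime ps_prime] dvd_x.
rewrite big_cons Gauss_dvd ?prime_coprime ?prime_ndvd_prod //.
by rewrite dvd_x ?mem_head //= IH // => s s_ps; rewrite dvd_x // inE s_ps orbT.
Qed.

Lemma reduced_prod_uniq_primes ps : uniq ps -> all prime ps ->
  reduced_modulus (\prod_(r <- ps) r).
Proof.
move=> ps_uniq ps_prime z k n_dvd_zk; apply: prod_uniq_primes_dvd => // r r_ps.
have r_prime : prime r by move/allP: ps_prime; apply.
have : r %| z ^ k.
  by apply: dvdn_trans n_dvd_zk; rewrite (big_rem r r_ps) dvdn_mulr.
by rewrite Euclid_dvdX // => /andP [].
Qed.

Theorem mainTheorem7 (ps : seq nat) :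
  (1 <= size ps)%N -> all prime ps -> uniq ps ->
  omega_very_cost_effective (\prod_(p <- ps) p).
Proof.
move=> size_gt0 ps_prime ps_uniq.
have n_reduced := reduced_prod_uniq_primes ps_uniq ps_prime.
case: ps size_gt0 ps_prime ps_uniq n_reduced => [|p ps] //= _.
move=> /andP [p_prime ps_prime] /andP [p_notin_ps _].
rewrite big_cons => n_reduced.
by apply: omega_very_cost_effective_prime_mul; rewrite ?prime_ndvd_prod.
Qed.
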